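(* Let $k\ge d$, let $\widetilde{\mathbf X}\in\mathbb R^{k\times d}$ have rows $(\widetilde{\mathbf x}_1,\dots,\widetilde{\mathbf x}_k)\sim\mathrm{VS}_{D_{\mathcal X}}^k$ and let $\mathbf X\in\mathbb R^{k\times d}$ have rows $(\mathbf x_1,\dots,\mathbf x_k)\sim D_{\mathcal X}^k$. Then for every positive definite $\boldsymbol\Sigma\in\mathbb R^{d\times d}$, the conditional distribution of $\widetilde{\mathbf X}$ given $\widetilde{\mathbf X}^\top\widetilde{\mathbf X}=\boldsymbol\Sigma$ is the same as the conditional distribution of $\mathbf X$ given $\mathbf X^\top\mathbf X=\boldsymbol\Sigma$; here conditioning on $\mathbf M=\boldsymbol\Sigma$ is understood as the limit $\epsilon\to0$ of conditioning on $\{\|\mathbf M-\boldsymbol\Sigma\|\le\epsilon\}$ ($\|\cdot\|$ the spectral norm), i.e. for every measurable $A$ for which these conditioning events have positive probability and $\lim_{\epsilon\to0}\Pr(\mathbf X\in A\mid\|\mathbf X^\top\mathbf X-\boldsymbol\Sigma\|\le\epsilon)$ exists, the limit $\lim_{\epsilon\to0}\Pr(\widetilde{\mathbf X}\in A\mid\|\widetilde{\mathbf X}^\top\widetilde{\mathbf X}-\boldsymbol\Sigma\|\le\epsilon)$ exists and equals it.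
   Context: $D_{\mathcal X}$ is a probability distribution on $\mathbb R^d$ with $\mathbb E\|\mathbf x\|^2<\infty$ and invertible $\boldsymbol\Sigma_{D_{\mathcal X}}:=\mathbb E[\mathbf x\mathbf x^\top]$; $D_{\mathcal X}^k$ is the law of $k$ i.i.d. draws. $\mathrm{VS}_{D_{\mathcal X}}^k(A)=\mathbb E_{D_{\mathcal X}^k}[\mathbf 1_A\det(\sum_{i=1}^k\mathbf x_i\mathbf x_i^\top)]/\big(d!\binom kd\det(\boldsymbol\Sigma_{D_{\mathcal X}})\big)$ for measurable $A\subseteq(\mathbb R^d)^k$. *)

From HB Require Import structures.
From mathcomp Require Import all_boot all_order all_algebra.
From mathcomp Require Import all_classical all_reals all_analysis.
Set Implicit Arguments. Unset Strict Implicit. Unset Printing Implicit Defensive.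
Import Order.TTheory GRing.Theory Num.Theory numFieldNormedType.Exports.
Local Open Scope classical_set_scope.
Local Open Scope ring_scope.

(* Points of R^d are d.-tuples of reals (Borel/product sigma-algebra from the
   library); points of (R^d)^k are k.-tuples of such, i.e. the rows of a
   k x d matrix. *)

Section Defs.
Variable R : realType.

Definition outer {d : nat} (x : d.-tuple R) : 'M[R]_d :=
  \matrix_(a < d, b < d) (tnth x a * tnth x b).

Definition rows_mx {k d : nat} (X : k.-tuple (d.-tuple R)) : 'M[R]_(k, d) :=
  \matrix_(i < k, a < d) tnth (tnth X i) a.

Definition second_moment {d : nat} (D : probability (d.-tuple R) R) : 'M[R]_d :=
  \matrix_(a < d, b < d) fine (\int[D]_x (tnth x a * tnth x b)%:E)%E.

(* Pk is the law D^k of k i.i.d. draws from D: the (unique) probability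
   measure on (R^d)^k whose value on every measurable rectangle
   B_1 x ... x B_k is the product of the D(B_i). *)
Definition is_iid_law {d k : nat} (D : probability (d.-tuple R) R)
    (Pk : probability (k.-tuple (d.-tuple R)) R) : Prop :=
  forall B : 'I_k -> set (d.-tuple R), (forall i, measurable (B i)) ->
    Pk [set X | forall i, B i (tnth X i)] = (\prod_(i < k) D (B i))%E.

Definition VS {d k : nat} (D : probability (d.-tuple R) R)
    (Pk : probability (k.-tuple (d.-tuple R)) R)
    (A : set (k.-tuple (d.-tuple R))) : \bar R :=
  ((\int[Pk]_(X in A) (\det (\sum_(i < k) outer (tnth X i)))%:E) *
   (((d`! * 'C(k, d))%:R * \det (second_moment D))^-1)%:E)%E.

Definition enorm {n : nat} (v : 'cV[R]_n) : R := Num.sqrt (\sum_(i < n) v i 0 ^+ 2).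

Definition specnorm {m n : nat} (M : 'M[R]_(m, n)) : R :=
  sup [set enorm (M *m v) | v in [set v : 'cV[R]_n | enorm v <= 1]].

Definition posdef {n : nat} (S : 'M[R]_n) : Prop :=
  S^T = S /\ forall v : 'cV[R]_n, v != 0 -> 0 < (v^T *m S *m v) 0 0.

Definition gram_ball {k d : nat} (S : 'M[R]_d) (eps : R) :
    set (k.-tuple (d.-tuple R)) :=
  [set X | specnorm ((rows_mx X)^T *m rows_mx X - S) <= eps].

Definition condprob {T : Type} (mu : set T -> \bar R) (A B : set T) : R :=
  fine (mu (A `&` B)) / fine (mu B).

End Defs.

From HB Require Import structures.
From mathcomp Require Import all_boot all_order all_algebra.
From mathcomp Require Import all_classical all_reals all_analysis.
From mathcomp Require Import fingroup perm ring lra.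
Import Order.TTheory GRing.Theory Num.Theory numFieldNormedType.Exports.
Local Open Scope classical_set_scope.
Local Open Scope ring_scope.
Set Implicit Arguments. Unset Strict Implicit. Unset Printing Implicit Defensive.

(* VS_D^k has density X |-> det (X^T X) / c with respect to D^k, where
   c = d! C(k,d) det Sigma_D.  On the conditioning event ||X^T X - Sigma|| <= eps
   every entry of X^T X is eps-close to Sigma, so by continuity of det the density
   is uniformly close to the nonzero constant det Sigma / c as eps -> 0.  In the
   ratio VS(A /\ B_eps) / VS(B_eps) that constant cancels, and what remains differs
   from D^k(A /\ B_eps) / D^k(B_eps) by an error vanishing with eps. *)

Lemma continuous_det (R : realType) n : continuous (fun M : 'M[R]_n => \det M).
Proof.
apply: continuous_big => [|s _]; first exact: add_continuous.
move=> M; apply: (@continuousM _ _ (fun=> _) (fun M : 'M[R]_n => \prod_i M i (s i)));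
  first exact: cst_continuous.
apply: (continuous_big (P := xpredT)) => [|i _]; first exact: mul_continuous.
exact: coord_continuous.
Qed.

Lemma det_entrywise_near (R : realType) n (S : 'M[R]_n) (eta : R) : 0 < eta ->
  exists2 del : R, 0 < del & forall M : 'M[R]_n,
    (forall a b, `|M a b - S a b| < del) -> `|\det M - \det S| < eta.
Proof.
move=> eta0.
have /cvgrPdist_lt/(_ _ eta0)/nbhs_ballP[del del0 H] := @continuous_det R n S.
exists del => // M HM; rewrite distrC; apply: H; split=> // a b.
by rewrite /ball /= distrC; exact: HM.
Qed.

Section spectral_norm.
Variable R : realType.

Definition sqnorm {n} (v : 'cV[R]_n) : R := \sum_j v j 0 ^+ 2.

Definition stretch_le {m n} (N : 'M[R]_(m, n)) (e : R) (v : 'cV[R]_n) : Prop :=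
  sqnorm (N *m v) <= e ^+ 2 * sqnorm v.

Lemma enormE n (v : 'cV[R]_n) : enorm v = Num.sqrt (sqnorm v).
Proof. by []. Qed.

Lemma sqnorm_ge0 n (v : 'cV[R]_n) : 0 <= sqnorm v.
Proof. by apply: sumr_ge0 => i _; exact: sqr_ge0. Qed.

Lemma sqr_coord_le_sqnorm n (v : 'cV[R]_n) j : v j 0 ^+ 2 <= sqnorm v.
Proof.
by rewrite /sqnorm (bigD1 j) //= lerDl; apply: sumr_ge0 => i _; exact: sqr_ge0.
Qed.

Lemma sqnormZ n c (v : 'cV[R]_n) : sqnorm (c *: v) = c ^+ 2 * sqnorm v.
Proof. by rewrite /sqnorm mulr_sumr; apply: eq_bigr => i _; rewrite mxE exprMn. Qed.

Lemma sqnorm_eq0 n (v : 'cV[R]_n) : sqnorm v = 0 -> v = 0.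
Proof.
move=> v0; apply/matrixP => i j; rewrite ord1 mxE.
by apply/eqP; rewrite -sqrf_eq0 eq_le sqr_ge0 andbT -v0 sqr_coord_le_sqnorm.
Qed.

Lemma specnorm_set_has_ubound m n (N : 'M[R]_(m, n)) :
  has_ubound [set enorm (N *m v) | v in [set v : 'cV[R]_n | enorm v <= 1]].
Proof.
exists (Num.sqrt (\sum_i (\sum_j `|N i j|) ^+ 2)) => _ [v /= v1 <-].
rewrite enormE; apply: ler_wsqrtr; apply: ler_sum => i _; rewrite mxE.
have coord_le1 j : `|v j 0| <= 1.
  rewrite -(expr_le1 (n := 2)) ?normr_ge0 // real_normK ?num_real //.
  apply: le_trans (sqr_coord_le_sqnorm v j) _.
  by rewrite -(@ler_sqrt _ _ 1) ?sqrtr1.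
rewrite -real_normK ?num_real // lerXn2r ?nnegrE ?sumr_ge0 //.
apply: le_trans (ler_norm_sum _ _ _) _; apply: ler_sum => j _.
by rewrite normrM ler_piMr.
Qed.

Lemma specnorm_leP m n (N : 'M[R]_(m, n)) e : 0 <= e ->
  specnorm N <= e <-> forall v, stretch_le N e v.
Proof.
move=> e0; split=> [Ne v|Nv].
- have [v0|vn0] := eqVneq (sqnorm v) 0.
    by rewrite /stretch_le v0 (sqnorm_eq0 v0) mulmx0 /sqnorm big1 ?mulr0 // => i _;
      rewrite mxE expr0n.
  have sp : 0 < sqnorm v by rewrite lt_def vn0 sqnorm_ge0.
  pose t := Num.sqrt (sqnorm v).
  have t2 : t ^+ 2 = sqnorm v by rewrite sqr_sqrtr // ltW.
  have unit_w : sqnorm (t^-1 *: v) = 1 by rewrite sqnormZ exprVn t2 mulVf.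
  have : enorm (N *m (t^-1 *: v)) <= e.
    apply: le_trans Ne; apply: ub_le_sup; first exact: specnorm_set_has_ubound.
    by exists (t^-1 *: v) => //=; rewrite enormE unit_w sqrtr1.
  rewrite enormE -scalemxAr sqnormZ exprVn t2 -(ler_sqr (x := Num.sqrt _))
    ?nnegrE ?sqrtr_ge0 // sqr_sqrtr ?mulr_ge0 ?invr_ge0 ?sqnorm_ge0 //.
  by rewrite ler_pdivrMl // mulrC.
- apply: ge_sup.
    by exists (enorm (N *m 0)), 0 => //=; rewrite enormE /sqnorm big1 ?sqrtr0 // => i _;
      rewrite mxE expr0n.
  move=> _ [v /= v1 <-]; rewrite enormE; apply: le_trans (ler_wsqrtr (Nv v)) _.
  by rewrite sqrtrM ?sqr_ge0 // sqrtr_sqr ger0_norm // ler_piMr.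
Qed.

Lemma specnorm_le_entry m n (N : 'M[R]_(m, n)) e a b : 0 <= e ->
  specnorm N <= e -> `|N a b| <= e.
Proof.
move=> e0 /(specnorm_leP _ e0) Nv.
pose v : 'cV[R]_n := \col_j (j == b)%:R.
have v1 : sqnorm v = 1.
  rewrite /sqnorm (bigD1 b) //= big1 ?addr0 => [|j jb]; first by rewrite mxE eqxx expr1n.
  by rewrite mxE (negbTE jb) expr0n.
have Nva : (N *m v) a 0 = N a b.
  rewrite mxE (bigD1 b) //= big1 ?addr0 => [|j jb]; first by rewrite mxE eqxx mulr1.
  by rewrite mxE (negbTE jb) mulr0.
rewrite -ler_sqr ?nnegrE // real_normK ?num_real // -Nva.
by apply: le_trans (sqr_coord_le_sqnorm _ _) _; move: (Nv v); rewrite /stretch_le v1 mulr1.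
Qed.

Lemma continuous_sqnorm_mulmx m n (N : 'M[R]_(m, n)) :
  continuous (fun w : 'cV[R]_n => sqnorm (N *m w)).
Proof.
have entry_cont i : continuous (fun w : 'cV[R]_n => (N *m w) i 0).
  rewrite (_ : (fun w => _) = fun w : 'cV[R]_n => \sum_j N i j * w j 0); last first.
    by apply: funext => w; rewrite mxE.
  apply: continuous_big => [|j _]; first exact: add_continuous.
  move=> w; apply: (@continuousM _ _ (fun=> N i j) (fun w : 'cV[R]_n => w j 0)).
    exact: cst_continuous.
  exact: coord_continuous.
apply: continuous_big => [|i _]; first exact: add_continuous.
by move=> w; apply: continuousM; exact: entry_cont.
Qed.

(* Testing [stretch_le] on this enumeration of the rational vectors (junk [0] on
   codes decoding to nothing) suffices by continuity, which makes the Gram ball a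
   countable intersection of measurable sets. *)
Definition rat_vec n (k : nat) : 'cV[R]_n :=
  if @unpickle 'cV[rat]_n k is Some z then map_mx ratr z else 0.

Lemma exists_rat_near n (v : 'cV[R]_n) r : 0 < r ->
  exists k, forall a b, `|v a b - rat_vec n k a b| < r.
Proof.
move=> r0.
have /fin_all_exists[q qv] j : exists q : rat, `|v j 0 - ratr q| < r.
  have [q] := @rat_in_itvoo R (v j 0 - r) (v j 0 + r) ltac:(lra).
  by rewrite in_itv /= => /andP[q1 q2]; exists q; rewrite ltr_distlC q1 q2.
exists (pickle (\col_j q j : 'cV[rat]_n)) => a b.
by rewrite /rat_vec pickleK !mxE ord1.
Qed.

Lemma stretch_le_rat_vec m n (N : 'M[R]_(m, n)) e :
  (forall k, stretch_le N e (rat_vec n k)) -> forall v, stretch_le N e v.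
Proof.
move=> Nrat v; rewrite /stretch_le -subr_ge0 leNgt; apply/negP => fv_neg.
pose f w := e ^+ 2 * sqnorm w - sqnorm (N *m w).
have cf : continuous f.
  move=> w; apply: (@continuousB _ _ _ (fun w : 'cV[R]_n => e ^+ 2 * sqnorm w)
    (fun w => sqnorm (N *m w))); last exact: continuous_sqnorm_mulmx.
  apply: (@continuousM _ _ (fun=> e ^+ 2) (fun w : 'cV[R]_n => sqnorm w)).
    exact: cst_continuous.
  rewrite (_ : (fun w => _) = fun w : 'cV[R]_n => sqnorm (1%:M *m w)).
    exact: continuous_sqnorm_mulmx.
  by apply: funext => u; rewrite mul1mx.
have /cvgrPdist_lt/(_ (- f v)) := cf v.
rewrite oppr_gt0 => /(_ fv_neg)/nbhs_ballP[r r0 near_v].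
have [k vk] := exists_rat_near v r0.
have := near_v (rat_vec n k); rewrite /ball /= => /(_ (conj r0 vk)).
have := Nrat k; rewrite /stretch_le -subr_ge0 -/(f _).
rewrite ltr_norml; lra.
Qed.

End spectral_norm.

Section measurable_matrix_functions.
Context d0 (T : measurableType d0) (R : realType).

Definition measurable_entries m n (M : T -> 'M[R]_(m, n)) :=
  forall a b, measurable_fun [set: T] (fun x => M x a b).

Lemma measurable_det n (M : T -> 'M[R]_n) :
  measurable_entries M -> measurable_fun [set: T] (fun x => \det (M x)).
Proof.
move=> mM; apply: measurable_sum => s; apply: measurable_realfun.measurable_funM => //.
by apply: measurable_prod => i _; exact: mM.
Qed.

Lemma measurable_sqnorm_mulmx m n (M : T -> 'M[R]_(m, n)) (v : 'cV[R]_n) :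
  measurable_entries M -> measurable_fun [set: T] (fun x => sqnorm (M x *m v)).
Proof.
move=> mM; apply: measurable_sum => i; apply: measurable_realfun.measurable_funX.
under eq_fun do rewrite mxE.
by apply: measurable_sum => j; apply: measurable_realfun.measurable_funM => //; exact: mM.
Qed.

End measurable_matrix_functions.

Section gram_ball.
Variables (R : realType) (d k : nat).
Local Notation T := (k.-tuple (d.-tuple R)).
Local Notation gram X := ((rows_mx X)^T *m rows_mx X).

Lemma gram_entryE (X : T) a b :
  gram X a b = \sum_i tnth (tnth X i) a * tnth (tnth X i) b.
Proof. by rewrite !mxE; apply: eq_bigr => i _; rewrite !mxE. Qed.

Lemma sum_outerE (X : T) : \sum_i outer (tnth X i) = gram X.
Proof.
by apply/matrixP => a b; rewrite gram_entryE summxE; apply: eq_bigr => i _; rewrite mxE.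
Qed.

Lemma measurable_gram_dev (S : 'M[R]_d) : measurable_entries (fun X : T => gram X - S).
Proof.
move=> a b; under eq_fun do rewrite [(_ - S) a b]mxE [(- S) a b]mxE gram_entryE.
apply: measurable_realfun.measurable_funB => //.
apply: measurable_sum => i; apply: measurable_realfun.measurable_funM;
  by apply: measurableT_comp (measurable_tnth _) (measurable_tnth _).
Qed.

Lemma gram_ballE (S : 'M[R]_d) eps : 0 <= eps ->
  gram_ball (k := k) S eps =
  \bigcap_n [set X : T | stretch_le (gram X - S) eps (rat_vec R d n)].
Proof.
move=> eps0; apply/seteqP; split=> X; rewrite /gram_ball /= (specnorm_leP _ eps0).
  by move=> XS n _; exact: XS.
by move=> XS; apply: stretch_le_rat_vec => n; exact: XS.
Qed.

Lemma measurable_gram_ball (S : 'M[R]_d) eps : 0 <= eps ->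
  measurable (gram_ball (k := k) S eps).
Proof.
move=> eps0; rewrite gram_ballE //; apply: bigcapT_measurable => n.
rewrite -[X in measurable X]setTI.
apply: measurable_fun_le => //.
exact: measurable_sqnorm_mulmx (measurable_gram_dev S).
Qed.

Lemma measurable_det_sum_outer :
  measurable_fun [set: T] (fun X : T => \det (\sum_(i < k) outer (tnth X i))).
Proof.
under eq_fun do rewrite sum_outerE -[gram _](subr0).
by apply: measurable_det; exact: measurable_gram_dev.
Qed.

Lemma det_sum_outer_near (S : 'M[R]_d) eta : 0 < eta ->
  \forall eps \near 0^'+, forall X : T, gram_ball S eps X ->
    `|\det (\sum_(i < k) outer (tnth X i)) - \det S| <= eta.
Proof.
move=> eta0; have [del del0 detS] := det_entrywise_near S eta0.
near=> eps => X XS; rewrite sum_outerE; apply/ltW/detS => a b.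
have eps0 : 0 < eps by near: eps; exact: nbhs_right_gt.
have := specnorm_le_entry a b (ltW eps0) XS.
rewrite [(_ - S) a b]mxE [(- S) a b]mxE => /le_lt_trans; apply.
by near: eps; exact: nbhs_right_lt.
Unshelve. all: by end_near.
Qed.

End gram_ball.

Lemma ratio_near (R : realFieldType) (s eta a b p1 p : R) :
  s != 0 -> 0 <= eta <= `|s| / 2 -> 0 < p -> 0 <= p1 <= p ->
  `|a - s * p1| <= eta * p1 -> `|b - s * p| <= eta * p ->
  `|a / b - p1 / p| <= 4 * eta / `|s|.
Proof.
move=> s0 /andP[eta0 eta_s] p0 /andP[p1_0 p1p] ha hb.
have s_pos : 0 < `|s| by rewrite normr_gt0.
have b_large : `|s| * p / 2 <= `|b|.
  have := lerB_dist (s * p) b; rewrite normrM (gtr0_norm p0) distrC.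
  have : eta * p <= `|s| / 2 * p by rewrite ler_wpM2r // ltW.
  lra.
have b0 : b != 0 by rewrite -normr_gt0 (lt_le_trans _ b_large) // !mulr_gt0.
have num : `|a * p - b * p1| <= 2 * eta * p1 * p.
  rewrite (_ : a * p - b * p1 = (a - s * p1) * p - (b - s * p) * p1); last by ring.
  apply: le_trans (ler_normB _ _) _.
  rewrite !normrM (gtr0_norm p0) (ger0_norm p1_0).
  have : `|a - s * p1| * p <= eta * p1 * p by rewrite ler_wpM2r // ltW.
  have : `|b - s * p| * p1 <= eta * p * p1 by rewrite ler_wpM2r.
  lra.
rewrite (_ : a / b - p1 / p = (a * p - b * p1) / (b * p)); last by field; rewrite b0 gt_eqF.
rewrite normrM normfV normrM (gtr0_norm p0) ler_pdivrMr ?mulr_gt0 ?normr_gt0 //.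
rewrite mulrAC ler_pdivlMr //; apply: le_trans (ler_wpM2r (ltW s_pos) num) _.
have : eta * p1 * p <= eta * p * p by rewrite ler_wpM2r ?ler_wpM2l // ltW.
have : eta * (`|s| * p / 2) * p <= eta * `|b| * p by rewrite ler_wpM2r ?ler_wpM2l // ltW.
nra.
Qed.

Section weighted_condprob.
Context d0 (T : measurableType d0) (R : realType).

Lemma integral_near_cst (mu : {measure set T -> \bar R}) (E : set T) (f : T -> R)
    (s eta : R) :
  measurable E -> (mu E < +oo)%E -> measurable_fun E f ->
  (forall x, E x -> `|f x - s| <= eta) ->
  (\int[mu]_(x in E) (f x)%:E)%E \is a fin_num /\
  `|fine (\int[mu]_(x in E) (f x)%:E)%E - s * fine (mu E)| <= eta * fine (mu E).
Proof.
move=> mE muE mf fs.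
have muEf : mu E \is a fin_num by rewrite ge0_fin_numE.
have int_cst r : mu.-integrable E (cst r%:E).
  by apply: (measurable_bounded_integrable (f := cst r)) => //; exact: bounded_cst.
have intf : mu.-integrable E (EFin \o f).
  apply: measurable_bounded_integrable => //; exists (`|s| + eta)%R; split=> [|M M_gt x Ex /=].
    by rewrite num_real.
  apply: le_trans (ltW M_gt); rewrite -[f x](subrK s).
  by apply: le_trans (ler_normD _ _) _; rewrite addrC lerD2l fs.
have lo : (((s - eta) * fine (mu E))%:E <= \int[mu]_(x in E) (f x)%:E)%E.
  rewrite EFinM fineK // -integral_cst //; apply: le_integral => // x /set_mem Ex.
  by rewrite lee_fin; have := fs x Ex; rewrite ler_norml; lra.
have hi : (\int[mu]_(x in E) (f x)%:E <= ((s + eta) * fine (mu E))%:E)%E.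
  rewrite EFinM fineK // -integral_cst //; apply: le_integral => // x /set_mem Ex.
  by rewrite lee_fin; have := fs x Ex; rewrite ler_norml; lra.
have fin : (\int[mu]_(x in E) (f x)%:E)%E \is a fin_num.
  by rewrite fin_numElt (lt_le_trans _ lo) ?ltNyr // (le_lt_trans hi) ?ltry.
split=> //; move: lo hi; rewrite -(fineK fin) !lee_fin ler_norml.
have : (0 <= fine (mu E))%R by rewrite fine_ge0.
nra.
Qed.

Lemma condprob_weighted_sub_cvg0 (mu : {finite_measure set T -> \bar R})
    (I : Type) (F : set_system I) {FF : Filter F}
    (f : T -> R) (c s : R) (A : set T) (B : I -> set T) :
  measurable A -> measurable_fun [set: T] f -> s != 0 -> c != 0 ->
  (\forall i \near F, measurable (B i) /\ (0 < mu (B i))%E) ->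
  (forall eta : R, 0 < eta ->
    \forall i \near F, forall x, B i x -> `|f x - s| <= eta) ->
  (fun i => condprob (fun E => (\int[mu]_(x in E) (f x)%:E) * c%:E)%E A (B i)
            - condprob mu A (B i)) @ F --> 0.
Proof.
move=> mA mf s0 c0 mB fs; apply/cvgrPdist_le => e e0.
pose eta := Num.min (`|s| / 2) (e * `|s| / 4).
have eta0 : 0 < eta by rewrite lt_min !divr_gt0 ?mulr_gt0 ?normr_gt0.
near=> i; rewrite sub0r normrN /condprob.
have [mBi muBi] : measurable (B i) /\ (0 < mu (B i))%E by near: i.
have fBi : forall x, B i x -> `|f x - s| <= eta by near: i; exact: fs.
have mABi := measurableI _ _ mA mBi.
have mu_lty E : measurable E -> (mu E < +oo)%E.
  by move=> mE; rewrite ltey_eq fin_num_measure.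
have [finAB nearAB] := integral_near_cst mABi (mu_lty _ mABi)
  (measurable_funS measurableT (@subsetT _ _) mf) (fun x ABx => fBi x ABx.2).
have [finB nearB] := integral_near_cst mBi (mu_lty _ mBi)
  (measurable_funS measurableT (@subsetT _ _) mf) fBi.
rewrite !fineM // -mulf_div divff // mulr1.
apply: le_trans (ratio_near _ _ _ _ nearAB nearB) _ => //.
- by rewrite ltW //= ge_min lexx.
- by apply: fine_gt0; rewrite muBi mu_lty.
- rewrite fine_ge0 ?measure_ge0 //= fine_le ?fin_num_measure //.
  by apply: le_measure; [exact: mem_set|exact: mem_set|exact: subIsetr].
- have eta_le : eta <= e * `|s| / 4 by rewrite ge_min lexx orbT.
  by rewrite ler_pdivrMr ?normr_gt0 //; lra.
Unshelve. all: by end_near.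
Qed.

End weighted_condprob.

Lemma posdef_det_neq0 (R : realType) n (S : 'M[R]_n) : posdef S -> \det S != 0.
Proof.
move=> [_ S_pos]; apply/negP => /det0P[v v0 vS].
have := S_pos v^T; rewrite trmx_eq0 => /(_ v0).
by rewrite trmxK vS mul0mx mxE ltxx.
Qed.

(* Neither [d <= k], the moment hypotheses nor the i.i.d. structure of [Pk] are
   needed: any reweighting of [Pk] by [det (X^T X)] and a nonzero constant has the
   same conditional limits. *)
Theorem lemma3 (R : realType) (d k : nat) (hdk : (d <= k)%N)
  (D : probability (d.-tuple R) R)
  (hmom : D.-integrable setT (fun x => (\sum_(a < d) tnth x a ^+ 2)%:E))
  (hinv : second_moment D \in unitmx)
  (Pk : probability (k.-tuple (d.-tuple R)) R)
  (hPk : is_iid_law D Pk)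
  (S : 'M[R]_d) (hS : posdef S)
  (A : set (k.-tuple (d.-tuple R))) (hA : measurable A)
  (hpos : forall eps : R, 0 < eps -> (0 < Pk (gram_ball (k:=k) S eps))%E)
  (hposVS : forall eps : R, 0 < eps -> (0 < VS D Pk (gram_ball (k:=k) S eps))%E)
  (l : R)
  (hl : condprob Pk A (gram_ball (k:=k) S eps) @[eps --> (0:R)^'+] --> l) :
  condprob (VS D Pk) A (gram_ball (k:=k) S eps) @[eps --> (0:R)^'+] --> l.
Proof.
pose c := ((d`! * 'C(k, d))%:R * \det (second_moment D))^-1.
have c0 : c != 0.
  by apply/eqP => c0; have := hposVS 1 ltr01; rewrite /VS -/c c0 mule0 ltxx.
apply: cvg_sub0 hl.
apply: (@condprob_weighted_sub_cvg0 _ _ _ Pk _ _ _ _ c (\det S)) => //.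
- exact: measurable_det_sum_outer.
- exact: posdef_det_neq0.
- near=> eps.
  have eps0 : 0 < eps by near: eps; exact: nbhs_right_gt.
  by split; [exact: measurable_gram_ball (ltW eps0)|exact: hpos].
- exact: det_sum_outer_near.
Unshelve. all: by end_near.
Qed.
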